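(* $\mathrm{AAut}_{\mathbb Z}(L)=\mathrm{Isom}_{\mathbb Z}(L)$.
   Context: $\mathbb F$ is a field of characteristic zero, $\mathfrak{sl}_2$ the Lie algebra of $2\times2$ trace-zero matrices over $\mathbb F$ with trace form $(u,v)=\mathrm{tr}(uv)$. Equitable basis: $x=\begin{pmatrix}1&0\\0&-1\end{pmatrix}$, $y=\begin{pmatrix}-1&2\\0&1\end{pmatrix}$, $z=\begin{pmatrix}-1&0\\-2&1\end{pmatrix}$, and $L=\mathbb Zx\oplus\mathbb Zy\oplus\mathbb Zz$. An antiautomorphism of $\mathfrak{sl}_2$ is an $\mathbb F$-linear bijection $\phi$ with $\phi([u,v])=[\phi(v),\phi(u)]$. $\mathrm{AAut}_{\mathbb Z}(L)$ is the group of all automorphisms and antiautomorphisms $\varphi$ of $\mathfrak{sl}_2$ with $\varphi(L)=L$. An isometry is an $\mathbb F$-linear bijection of $\mathfrak{sl}_2$ preserving the trace form; $\mathrm{Isom}_{\mathbb Z}(L)$ is the group of isometries $\varphi$ with $\varphi(L)=L$. *)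

From HB Require Import structures.
From mathcomp Require Import all_boot all_order all_algebra.
Set Implicit Arguments. Unset Strict Implicit. Unset Printing Implicit Defensive.
Import GRing.Theory.
Local Open Scope ring_scope.

Section SL2.
Variable F : fieldType.

Definition mx2 (a b c d : F) : 'M[F]_2 :=
  \matrix_(i < 2, j < 2)
    if i == 0 then (if j == 0 then a else b) else (if j == 0 then c else d).

Definition sl2 : pred 'M[F]_2 := fun u => \tr u == 0.

Definition lie (u v : 'M[F]_2) : 'M[F]_2 := u *m v - v *m u.
Definition trform (u v : 'M[F]_2) : F := \tr (u *m v).

Definition ex : 'M[F]_2 := mx2 1 0 0 (-1).
Definition ey : 'M[F]_2 := mx2 (-1) 2 0 1.
Definition ez : 'M[F]_2 := mx2 (-1) 0 (-2) 1.

Definition inL (u : 'M[F]_2) : Prop :=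
  exists a b c : int, u = a%:~R *: ex + b%:~R *: ey + c%:~R *: ez.

(* phi is an F-linear bijection of sl_2 (values off sl_2 are irrelevant) *)
Definition lin_bij_sl2 (phi : 'M[F]_2 -> 'M[F]_2) : Prop :=
  [/\ (forall (a : F) u v, u \in sl2 -> v \in sl2 -> phi (a *: u + v) = a *: phi u + phi v),
      {in sl2, forall u, phi u \in sl2},
      {in sl2 &, injective phi} &
      (forall v, v \in sl2 -> exists2 u, u \in sl2 & phi u = v)].

Definition is_aut (phi : 'M[F]_2 -> 'M[F]_2) : Prop :=
  {in sl2 &, forall u v, phi (lie u v) = lie (phi u) (phi v)}.

Definition is_antiaut (phi : 'M[F]_2 -> 'M[F]_2) : Prop :=
  {in sl2 &, forall u v, phi (lie u v) = lie (phi v) (phi u)}.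

Definition is_isom (phi : 'M[F]_2 -> 'M[F]_2) : Prop :=
  {in sl2 &, forall u v, trform (phi u) (phi v) = trform u v}.

Definition preservesL (phi : 'M[F]_2 -> 'M[F]_2) : Prop :=
  (forall u, inL u -> inL (phi u)) /\ (forall v, inL v -> exists u, inL u /\ phi u = v).

Definition in_AAutZ (phi : 'M[F]_2 -> 'M[F]_2) : Prop :=
  lin_bij_sl2 phi /\ (is_aut phi \/ is_antiaut phi) /\ preservesL phi.

Definition in_IsomZ (phi : 'M[F]_2 -> 'M[F]_2) : Prop :=
  lin_bij_sl2 phi /\ is_isom phi /\ preservesL phi.

End SL2.

(* Both sides of the theorem require phi to be a linear bijection of sl_2
   with phi(L) = L, so everything reduces to: for a linear bijection phi
   of sl_2 (char F <> 2), phi is an (anti)automorphism iff it is an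
   isometry. *)

From HB Require Import structures.
From mathcomp Require Import all_boot all_order all_algebra ring.
Set Implicit Arguments.
Unset Strict Implicit.
Unset Printing Implicit Defensive.
Import GRing.Theory.
Local Open Scope ring_scope.

Section SL2Identities.
Variable F : fieldType.
Local Notation M2 := 'M[F]_2.
Local Notation sl2F := (@sl2 F).

Lemma mx2E (M : M2) : M = mx2 (M 0 0) (M 0 1) (M 1 0) (M 1 1).
Proof.
apply/matrixP=> i j; rewrite mxE.
by case: i => [[|[|//]] ?]; case: j => [[|[|//]] ?]; congr (M _ _); apply: val_inj.
Qed.

Lemma mx2_inj a b c d a' b' c' d' : mx2 a b c d = mx2 a' b' c' d' :> M2 ->
  [/\ a = a', b = b', c = c' & d = d'].
Proof.
by move=> /matrixP eq_ad; split;
  [move: (eq_ad 0 0) | move: (eq_ad 0 1) | move: (eq_ad 1 0) | move: (eq_ad 1 1)];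
  rewrite !mxE.
Qed.

Lemma mx2_congr a b c d a' b' c' d' : a = a' -> b = b' -> c = c' -> d = d' ->
  mx2 a b c d = mx2 a' b' c' d' :> M2.
Proof. by move=> -> -> -> ->. Qed.

Lemma mx2_mul a b c d a' b' c' d' : mx2 a b c d *m mx2 a' b' c' d' =
  mx2 (a * a' + b * c') (a * b' + b * d') (c * a' + d * c') (c * b' + d * d') :> M2.
Proof.
apply/matrixP=> i j; rewrite !mxE !big_ord_recr big_ord0 /= add0r !mxE.
by case: i => [[|[|//]] ?]; case: j => [[|[|//]] ?].
Qed.

Lemma mx2_add a b c d a' b' c' d' :
  mx2 a b c d + mx2 a' b' c' d' = mx2 (a + a') (b + b') (c + c') (d + d') :> M2.
Proof. by apply/matrixP=> i j; rewrite !mxE; case: ifP; case: ifP. Qed.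

Lemma mx2_scale k a b c d : k *: mx2 a b c d = mx2 (k * a) (k * b) (k * c) (k * d) :> M2.
Proof. by apply/matrixP=> i j; rewrite !mxE; case: ifP; case: ifP. Qed.

Lemma mx2_opp a b c d : - mx2 a b c d = mx2 (- a) (- b) (- c) (- d) :> M2.
Proof. by apply/matrixP=> i j; rewrite !mxE; case: ifP; case: ifP. Qed.

Lemma mx2_zero : 0 = mx2 0 0 0 0 :> M2.
Proof. by apply/matrixP=> i j; rewrite !mxE; case: ifP; case: ifP. Qed.

Lemma mx2_tr a b c d : \tr (mx2 a b c d : M2) = a + d.
Proof. by rewrite /mxtrace !big_ord_recr big_ord0 /= add0r !mxE. Qed.

Ltac mx2_ring :=
  rewrite /lie /trform;
  rewrite !(mx2_mul, mx2_add, mx2_scale, mx2_opp, mx2_tr);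
  first [apply: mx2_congr; ring | ring].

Definition std_h : M2 := mx2 1 0 0 (-1).
Definition std_e : M2 := mx2 0 1 0 0.
Definition std_f : M2 := mx2 0 0 1 0.

Lemma sl2E u : u \in sl2F -> u = mx2 (u 0 0) (u 0 1) (u 1 0) (- u 0 0).
Proof.
rewrite unfold_in /sl2 {1}[u]mx2E mx2_tr addrC addr_eq0 => /eqP u11.
by rewrite {1}[u]mx2E u11.
Qed.

Lemma mx2_sl2 p q r : mx2 p q r (- p) \in sl2F.
Proof. by rewrite unfold_in /sl2 mx2_tr subrr. Qed.

Lemma std_sl2 : [/\ std_h \in sl2F, std_e \in sl2F & std_f \in sl2F].
Proof. by split; rewrite /std_h /std_e /std_f ?mx2_sl2 // -[X in mx2 _ _ _ X]oppr0 mx2_sl2. Qed.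

Lemma mx2_std p q r : mx2 p q r (- p) = p *: std_h + q *: std_e + r *: std_f.
Proof. rewrite /std_h /std_e /std_f; mx2_ring. Qed.

Lemma std_gram_diag :
  [/\ trform std_h std_h = 2, trform std_e std_e = 0 & trform std_f std_f = 0].
Proof. by rewrite /std_h /std_e /std_f; split; mx2_ring. Qed.

Lemma std_gram_offdiag :
  [/\ trform std_h std_e = 0, trform std_h std_f = 0 & trform std_e std_f = 1].
Proof. by rewrite /std_h /std_e /std_f; split; mx2_ring. Qed.

Lemma std_pair_coord x y x' y' v : v = std_e \/ v = std_f ->
  x *: std_h - y *: v = x' *: std_h - y' *: v -> x = x' /\ y = y'.
Proof.
case=> ->; rewrite /std_h /std_e /std_f !(mx2_scale, mx2_opp, mx2_add);
  move=> /mx2_inj [e00 e01 e10 _]; rewrite !(mulr0, mulr1, oppr0, addr0, add0r) in e00 e01 e10.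
- by split; last exact: oppr_inj.
- by split; last exact: oppr_inj.
Qed.

Lemma sl2_0 : (0 : M2) \in sl2F.
Proof. by rewrite unfold_in /sl2 linear0. Qed.

Lemma sl2_lin k u v : u \in sl2F -> v \in sl2F -> k *: u + v \in sl2F.
Proof.
rewrite !unfold_in /sl2 => /eqP tr_u /eqP tr_v.
by rewrite mxtraceD mxtraceZ tr_u tr_v mulr0 addr0.
Qed.

Lemma sl2Z k u : u \in sl2F -> k *: u \in sl2F.
Proof. by rewrite !unfold_in /sl2 mxtraceZ => /eqP ->; rewrite mulr0. Qed.

Lemma lie_sl2 u v : lie u v \in sl2F.
Proof. by rewrite unfold_in /sl2 /lie mxtraceD linearN /= mxtrace_mulC subrr. Qed.

Lemma lieC (u v : M2) : lie u v = - lie v u.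
Proof. by rewrite /lie opprB. Qed.

Lemma lieZl k (u v : M2) : lie (k *: u) v = k *: lie u v.
Proof. by rewrite /lie -scalemxAl -scalemxAr scalerBr. Qed.

Lemma trformC (u v : M2) : trform u v = trform v u.
Proof. exact: mxtrace_mulC. Qed.

Lemma trformZl k (u v : M2) : trform (k *: u) v = k * trform u v.
Proof. by rewrite /trform -scalemxAl mxtraceZ. Qed.

Lemma trformZr k (u v : M2) : trform u (k *: v) = k * trform u v.
Proof. by rewrite /trform -scalemxAr mxtraceZ. Qed.

Lemma trform_comb (u v w z : M2) x y s :
  trform (x *: u + y *: v + s *: w) z = x * trform u z + y * trform v z + s * trform w z.
Proof. by rewrite /trform !mulmxDl -!scalemxAl !mxtraceD !mxtraceZ. Qed.

Lemma trform_combr (u v w z : M2) x y s :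
  trform z (x *: u + y *: v + s *: w) = x * trform z u + y * trform z v + s * trform z w.
Proof. by rewrite trformC trform_comb !(trformC z). Qed.

Lemma trformBl (u v w : M2) : trform (u - v) w = trform u w - trform v w.
Proof. by rewrite /trform mulmxBl mxtraceD linearN. Qed.

Lemma trform_lie_l (b c : M2) : trform (lie b c) b = 0.
Proof. rewrite [b]mx2E [c]mx2E; mx2_ring. Qed.

Lemma trform_lie_r (b c : M2) : trform (lie b c) c = 0.
Proof. rewrite [b]mx2E [c]mx2E; mx2_ring. Qed.

Lemma lie_lie u v w : u \in sl2F -> v \in sl2F -> w \in sl2F ->
  lie (lie u v) w = (2 * trform v w) *: u - (2 * trform u w) *: v.
Proof. by move=> /sl2E -> /sl2E -> /sl2E ->; mx2_ring. Qed.

Lemma trform_lie_lie b c : b \in sl2F -> c \in sl2F ->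
  trform (lie b c) (lie b c) = 2 * (trform b c ^+ 2 - trform b b * trform c c).
Proof. by move=> /sl2E -> /sl2E ->; mx2_ring. Qed.

Lemma lie_comb (a b c : M2) x1 x2 x3 y1 y2 y3 :
  lie (x1 *: a + x2 *: b + x3 *: c) (y1 *: a + y2 *: b + y3 *: c) =
  (x1 * y2 - x2 * y1) *: lie a b + (x1 * y3 - x3 * y1) *: lie a c
  + (x2 * y3 - x3 * y2) *: lie b c.
Proof. rewrite [a]mx2E [b]mx2E [c]mx2E; mx2_ring. Qed.

Lemma lie_mx2 p q r p' q' r' : lie (mx2 p q r (- p)) (mx2 p' q' r' (- p')) =
  mx2 (q * r' - r * q') (2 * (p * q' - q * p')) (2 * (r * p' - p * r'))
      (- (q * r' - r * q')) :> M2.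
Proof. mx2_ring. Qed.

Lemma trform_std p q r : let u := mx2 p q r (- p) in
  [/\ trform u std_h = 2 * p, trform u std_e = r & trform u std_f = q].
Proof. by rewrite /std_h /std_e /std_f; split; mx2_ring. Qed.

Variable two_neq0 : (2%:R : F) != 0.

Lemma trform_nondeg m : m \in sl2F -> {in sl2F, forall w, trform m w = 0} -> m = 0.
Proof.
move=> /sl2E -> m_perp; have [Sh Se Sf] := std_sl2.
have [uh ue uf] := trform_std (m 0 0) (m 0 1) (m 1 0).
move: (m_perp _ Sh) (m_perp _ Se) (m_perp _ Sf); rewrite uh ue uf => /eqP.
by rewrite mulf_eq0 (negbTE two_neq0) => /eqP -> -> ->; rewrite oppr0 -mx2_zero.
Qed.

Lemma gram_standard a b c :
  a \in sl2F -> b \in sl2F -> c \in sl2F ->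
  (forall w, w \in sl2F -> exists x y z, w = x *: a + y *: b + z *: c) ->
  trform a a = 2 -> trform b b = 0 -> trform c c = 0 ->
  trform a b = 0 -> trform a c = 0 -> trform b c = 1 ->
  exists2 t, t ^+ 2 = 1 &
    [/\ lie a b = (2 * t) *: b, lie a c = (- (2 * t)) *: c & lie b c = t *: a].
Proof.
move=> Sa Sb Sc span Gaa Gbb Gcc Gab Gac Gbc.
pose t := trform (lie b c) a / 2.
have lie_bc : lie b c = t *: a.
  apply/eqP; rewrite -subr_eq0; apply/eqP/trform_nondeg.
    by rewrite -scaleN1r addrC sl2_lin ?lie_sl2 ?sl2Z.
  move=> w /span [x [y [z ->]]].
  rewrite trform_combr !(trformBl (lie b c)) !trformZl trform_lie_l trform_lie_r.
  by rewrite Gaa Gab Gac /t divfK //; ring.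
have t2 : t ^+ 2 = 1.
  have norm_bc := trform_lie_lie Sb Sc.
  rewrite lie_bc trformZl trformZr Gaa Gbc Gbb Gcc in norm_bc.
  apply: (mulfI two_neq0); transitivity (t * (t * 2)); first ring.
  by rewrite norm_bc; ring.
have unscale u v : t *: u = v -> u = t *: v.
  by move=> <-; rewrite scalerA -expr2 t2 scale1r.
exists t => //; split => //.
- have -> : lie a b = t *: (2 *: b).
    apply: unscale; rewrite -lieZl -lie_bc lie_lie // (trformC c) Gbc Gbb.
    by rewrite mulr0 scale0r subr0 mulr1.
  by rewrite scalerA mulrC.
- have -> : lie a c = t *: (-2 *: c).
    apply: unscale; rewrite -lieZl -lie_bc lie_lie // Gcc Gbc.
    by rewrite mulr0 scale0r add0r mulr1 scaleNr.
  by rewrite scalerA; congr (_ *: _); ring.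
Qed.

End SL2Identities.

Arguments std_h {F}.
Arguments std_e {F}.
Arguments std_f {F}.

Section LinearBijection.
Variable F : fieldType.
Local Notation M2 := 'M[F]_2.
Local Notation sl2F := (@sl2 F).
Variable phi : M2 -> M2.
Hypothesis phi_bij : lin_bij_sl2 phi.

Lemma phi_lin k u v : u \in sl2F -> v \in sl2F -> phi (k *: u + v) = k *: phi u + phi v.
Proof. by case: phi_bij => lin _ _ _; apply: lin. Qed.

Lemma phi_sl2 u : u \in sl2F -> phi u \in sl2F.
Proof. by case: phi_bij => _ Sphi _ _; apply: Sphi. Qed.

Lemma phi_inj : {in sl2F &, injective phi}.
Proof. by case: phi_bij. Qed.

Lemma phi0 : phi 0 = 0.
Proof.
have := phi_lin 1 (sl2_0 F) (sl2_0 F); rewrite scale1r addr0 scale1r => /esym/eqP.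
by rewrite -subr_eq0 addrK => /eqP.
Qed.

Lemma phiZ k u : u \in sl2F -> phi (k *: u) = k *: phi u.
Proof. by move=> Su; rewrite -[k *: u]addr0 phi_lin ?sl2_0 // phi0 addr0. Qed.

Lemma phi_diff x y u v : u \in sl2F -> v \in sl2F ->
  phi (x *: u - y *: v) = x *: phi u - y *: phi v.
Proof. by move=> Su Sv; rewrite -scaleNr phi_lin ?sl2Z // phiZ // scaleNr. Qed.

Lemma phi_std p q r :
  phi (mx2 p q r (- p)) = p *: phi std_h + q *: phi std_e + r *: phi std_f.
Proof.
have [Sh Se Sf] := std_sl2 F.
by rewrite mx2_std addrC phi_lin ?sl2_lin ?sl2Z // addrC phi_lin ?sl2Z // phiZ.
Qed.

Lemma phi_std_span w : w \in sl2F ->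
  exists x y z, w = x *: phi std_h + y *: phi std_e + z *: phi std_f.
Proof.
case: phi_bij => _ _ _ /[apply] -[u /sl2E -> <-].
by exists (u 0 0), (u 0 1), (u 1 0); rewrite phi_std.
Qed.

Variable two_neq0 : (2%:R : F) != 0.

(* Applying an automorphism phi to [[u,v],w] in two ways and cancelling phi
   transports the coefficients of the double bracket formula. *)
Lemma aut_transport_form u v w : is_aut phi ->
  u \in sl2F -> v \in sl2F -> w \in sl2F ->
  (2 * trform (phi v) (phi w)) *: u - (2 * trform (phi u) (phi w)) *: v =
  (2 * trform v w) *: u - (2 * trform u w) *: v.
Proof.
move=> aut Su Sv Sw.
have S_comb x y : x *: u - y *: v \in sl2F by rewrite -scaleNr sl2_lin ?sl2Z.
apply: phi_inj => //.
rewrite phi_diff // -lie_lie ?phi_sl2 // -(aut _ _ Su Sv) -aut ?lie_sl2 //.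
by rewrite lie_lie // phi_diff.
Qed.

(* Automorphisms are isometries: the transported coefficients for (h, e)
   and (h, f) give (phi x, phi w) = (x, w) for x = h, e, f, then linearity. *)
Lemma aut_isometry : is_aut phi -> is_isom phi.
Proof.
move=> aut v w Sv Sw; have [Sh Se Sf] := std_sl2 F.
have [form_e form_h] := std_pair_coord (or_introl erefl) (aut_transport_form aut Sh Se Sw).
have [form_f _] := std_pair_coord (or_intror erefl) (aut_transport_form aut Sh Sf Sw).
rewrite (sl2E Sv) phi_std trform_comb mx2_std trform_comb.
by rewrite (mulfI two_neq0 form_e) (mulfI two_neq0 form_h) (mulfI two_neq0 form_f).
Qed.

(* For an isometry, the images of h, e, f form a spanning triple with the
   Gram matrix of (h, e, f), hence satisfy the relations of (h, e, f) up to a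
   sign t. *)
Lemma isometry_std_relations : is_isom phi ->
  exists2 t, t ^+ 2 = 1 &
    [/\ lie (phi std_h) (phi std_e) = (2 * t) *: phi std_e,
        lie (phi std_h) (phi std_f) = (- (2 * t)) *: phi std_f &
        lie (phi std_e) (phi std_f) = t *: phi std_h].
Proof.
move=> iso; have [Sh Se Sf] := std_sl2 F.
have [hh ee ff] := std_gram_diag F; have [he hf ef] := std_gram_offdiag F.
by apply: gram_standard; rewrite ?phi_sl2 ?iso //; apply: phi_std_span.
Qed.

Lemma phi_lie_scaled t :
  lie (phi std_h) (phi std_e) = (2 * t) *: phi std_e ->
  lie (phi std_h) (phi std_f) = (- (2 * t)) *: phi std_f ->
  lie (phi std_e) (phi std_f) = t *: phi std_h ->
  {in sl2F &, forall u v, lie (phi u) (phi v) = t *: phi (lie u v)}.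
Proof.
move=> rel_he rel_hf rel_ef u v /sl2E -> /sl2E ->.
move: (u 0 0) (u 0 1) (u 1 0) (v 0 0) (v 0 1) (v 1 0) => p q r p' q' r'.
rewrite lie_mx2 (phi_std p) (phi_std p') (phi_std (q * r' - r * q')).
rewrite lie_comb rel_he rel_hf rel_ef !scalerDr !scalerA -[RHS]addrA [RHS]addrC.
by congr (_ + _ + _); congr (_ *: _); ring.
Qed.

Lemma isometry_aut_or_antiaut : is_isom phi -> is_aut phi \/ is_antiaut phi.
Proof.
move=> /isometry_std_relations [t t2 [rel_he rel_hf rel_ef]].
have scaled := phi_lie_scaled rel_he rel_hf rel_ef.
move/eqP: t2; rewrite sqrf_eq1 => /orP[/eqP t1 | /eqP tN1].
- by left=> u v Su Sv; rewrite scaled // t1 scale1r.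
- right=> u v Su Sv; rewrite scaled // tN1 scaleN1r (lieC v u).
  by rewrite -[- lie u v]scaleN1r phiZ ?lie_sl2 // scaleN1r opprK.
Qed.

End LinearBijection.

Lemma lin_bij_opp (F : fieldType) (phi : 'M[F]_2 -> 'M[F]_2) :
  lin_bij_sl2 phi -> lin_bij_sl2 (fun u => - phi u).
Proof.
case=> lin Sphi inj onto; split.
- by move=> k u v Su Sv; rewrite lin // opprD scalerN.
- by move=> u Su; rewrite -scaleN1r sl2Z ?Sphi.
- by move=> u v Su Sv /oppr_inj; apply: inj.
- move=> v Sv; have [|u Su phi_u] := onto (- v); first by rewrite -scaleN1r sl2Z.
  by exists u => //; rewrite phi_u opprK.
Qed.

Lemma antiaut_opp (F : fieldType) (phi : 'M[F]_2 -> 'M[F]_2) :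
  is_antiaut phi -> is_aut (fun u => - phi u).
Proof. by move=> anti u v Su Sv /=; rewrite anti // lieC /lie !mulNmx !mulmxN !opprK. Qed.

Lemma isom_opp (F : fieldType) (phi : 'M[F]_2 -> 'M[F]_2) :
  is_isom (fun u => - phi u) -> is_isom phi.
Proof. by move=> iso u v Su Sv; rewrite -(iso u v) // /trform /= mulNmx mulmxN opprK. Qed.

Lemma aut_or_antiaut_isometry (F : fieldType) (phi : 'M[F]_2 -> 'M[F]_2) :
  (2%:R : F) != 0 -> lin_bij_sl2 phi -> is_aut phi \/ is_antiaut phi -> is_isom phi.
Proof.
move=> two_neq0 bij [aut | anti]; first exact: aut_isometry.
exact/isom_opp/(aut_isometry (lin_bij_opp bij) two_neq0)/antiaut_opp.
Qed.

Theorem theorem5p5 (F : fieldType) (charF0 : [pchar F] =i pred0)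
    (phi : 'M[F]_2 -> 'M[F]_2) :
  in_AAutZ phi <-> in_IsomZ phi.
Proof.
have two_neq0 : (2%:R : F) != 0 by rewrite ((pcharf0P F).1 charF0).
split=> [[bij [aut_anti preserveL]] | [bij [iso preserveL]]]; do 2!split=> //.
- exact: aut_or_antiaut_isometry.
- exact: isometry_aut_or_antiaut.
Qed.
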